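(* Let $n\ge 2$ and let $\mathbf{C}_n=\langle C_n,\wedge,\vee,\to,0,1\rangle$ be a semi-Heyting algebra whose lattice reduct is the chain $C_n=\{a_0<a_1<\cdots<a_{n-1}\}$ with $a_0=0$, $a_{n-1}=1$. Then the set $C_n\setminus\{a_0\}=\{a_1,\dots,a_{n-1}\}$ is closed under $\wedge,\vee,\to$ (in particular $a\to b\neq a_0$ for all $a,b\in C_n\setminus\{a_0\}$), and $\mathbf{S}_{n-1}=\langle C_n\setminus\{a_0\},\wedge,\vee,\to,a_1,1\rangle$ (with the restricted operations, bottom $a_1$ and top $1$) is a semi-Heyting algebra.
   Context: A semi-Heyting algebra is an algebra $\langle L,\vee,\wedge,\to,0,1\rangle$ such that: (SH1) $\langle L,\vee,\wedge,0,1\rangle$ is a bounded lattice with least element $0$ and greatest element $1$; (SH2) $x\wedge(x\to y)=x\wedge y$; (SH3) $x\wedge(y\to z)=x\wedge[(x\wedge y)\to(x\wedge z)]$; (SH4) $x\to x=1$, for all $x,y,z\in L$. *)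

From mathcomp Require Import all_boot.
Set Implicit Arguments. Unset Strict Implicit. Unset Printing Implicit Defensive.

Definition semiHeyting (L : Type) (join meet imp : L -> L -> L) (bot top : L) : Prop :=
  (forall x y, join x y = join y x) /\
  (forall x y, meet x y = meet y x) /\
  (forall x y z, join x (join y z) = join (join x y) z) /\
  (forall x y z, meet x (meet y z) = meet (meet x y) z) /\
  (forall x y, join x (meet x y) = x) /\
  (forall x y, meet x (join x y) = x) /\
  (forall x, join bot x = x) /\
  (forall x, meet top x = x) /\
  (forall x y, meet x (imp x y) = meet x y) /\
  (forall x y z, meet x (imp y z) = meet x (imp (meet x y) (meet x z))) /\
  (forall x, imp x x = top).

(* The chain C_n = {a_0 < ... < a_{n-1}} is modelled by 'I_n with the natural
   order: meet = min, join = max, a_0 = 0, a_{n-1} = n-1. *)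
Definition chain_meet n (x y : 'I_n) : 'I_n := if x <= y then x else y.
Definition chain_join n (x y : 'I_n) : 'I_n := if x <= y then y else x.

Section Chain.
Variables (n : nat) (hn : 2 <= n).

Lemma chain_lt0 : 0 < n. Proof. exact: leq_trans hn. Qed.
Lemma chain_lt1 : 1 < n. Proof. exact: hn. Qed.
Lemma chain_ltn1 : n.-1 < n. Proof. by case: n hn. Qed.

Definition a0 : 'I_n := Ordinal chain_lt0.
Definition a1 : 'I_n := Ordinal chain_lt1.
Definition atop : 'I_n := Ordinal chain_ltn1.

Definition Cpos := {x : 'I_n | 0 < x}.

Definition pos_a1 : Cpos := exist _ a1 (isT : 0 < 1).
Lemma atop_pos : 0 < atop. Proof. by rewrite /= -ltnS prednK ?chain_lt0. Qed.
Definition pos_top : Cpos := exist _ atop atop_pos.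

(* Restriction of a binary operation on C_n to C_n \ {a_0}; the default value
   pos_a1 is only used if the result leaves the subset, which the theorem
   excludes by its closure clause. *)
Definition restr (f : 'I_n -> 'I_n -> 'I_n) (x y : Cpos) : Cpos :=
  insubd pos_a1 (f (val x) (val y)).
End Chain.

(* In a chain, meet and join of nonzero elements are nonzero, and by (SH2)
   [a /\ (a -> b) = a /\ b], so [a -> b] cannot be [0] when [a] and [b] are not.
   Hence the operations restrict to [C_n \ {a_0}], and every equational axiom
   transfers along the injection into [C_n]; the only change is the bottom, and
   [a_1] is the least element of the remaining chain. *)

From mathcomp Require Import all_boot zify.

Section SemiHeytingEmbedding.
Variables (S L : Type) (e : S -> L).
Variables (joinS meetS impS : S -> S -> S) (botS topS : S).
Variables (joinL meetL impL : L -> L -> L) (botL topL : L).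
Hypotheses (e_inj : injective e)
  (e_join : forall x y, e (joinS x y) = joinL (e x) (e y))
  (e_meet : forall x y, e (meetS x y) = meetL (e x) (e y))
  (e_imp : forall x y, e (impS x y) = impL (e x) (e y))
  (e_top : e topS = topL)
  (e_botS_least : forall x, joinL (e botS) (e x) = e x).

Lemma semiHeyting_embedding :
  semiHeyting joinL meetL impL botL topL ->
  semiHeyting joinS meetS impS botS topS.
Proof.
move=> [jC [mC [jA [mA [jm [mj [_ [m1 [sh2 [sh3 sh4]]]]]]]]]].
do 10?split=> *; apply: e_inj;
  by rewrite ?e_join ?e_meet ?e_imp ?e_top ?e_join ?e_meet ?e_imp.
Qed.

End SemiHeytingEmbedding.

Lemma chain_meet_gt0 {n} (a b : 'I_n) : (0 < chain_meet a b) = (0 < a) && (0 < b).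
Proof.
by rewrite /chain_meet; case: ifP => ab; apply/idP/andP => [|[]]; lia.
Qed.

Lemma chain_join_gt0 {n} (a b : 'I_n) : (0 < chain_join a b) = (0 < a) || (0 < b).
Proof.
by rewrite /chain_join; case: ifP => ab; apply/idP/orP => [|[]]; lia.
Qed.

Lemma chain_imp_gt0 {n} {imp : 'I_n -> 'I_n -> 'I_n} :
  (forall x y, chain_meet x (imp x y) = chain_meet x y) ->
  forall a b : 'I_n, 0 < a -> 0 < b -> 0 < imp a b.
Proof.
move=> sh2 a b a_gt0 b_gt0.
by have := chain_meet_gt0 a (imp a b); rewrite sh2 chain_meet_gt0 a_gt0 b_gt0 /= => <-.
Qed.

Section PositiveChain.
Variables (n : nat) (hn : 2 <= n).

Lemma neq_a0 (a : 'I_n) : (a != a0 hn) = (0 < a).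
Proof. by rewrite -val_eqE /= lt0n. Qed.

Lemma val_restr (f : 'I_n -> 'I_n -> 'I_n) :
  (forall a b : 'I_n, 0 < a -> 0 < b -> 0 < f a b) ->
  forall x y : Cpos n, val (restr hn f x y) = f (val x) (val y).
Proof. by move=> f_gt0 x y; rewrite /restr insubdK //; apply: f_gt0 (valP x) (valP y). Qed.

Lemma chain_join_a1 (x : Cpos n) : chain_join (val (pos_a1 hn)) (val x) = val x.
Proof. by rewrite /chain_join /= (valP x). Qed.

End PositiveChain.

Theorem mainTheorem1 (n : nat) (hn : 2 <= n) (imp : 'I_n -> 'I_n -> 'I_n) :
  semiHeyting (@chain_join n) (@chain_meet n) imp (a0 hn) (atop hn) ->
  (forall a b : 'I_n, a != a0 hn -> b != a0 hn ->
     [/\ chain_meet a b != a0 hn, chain_join a b != a0 hn & imp a b != a0 hn]) /\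
  semiHeyting (restr hn (@chain_join n)) (restr hn (@chain_meet n)) (restr hn imp)
              (pos_a1 hn) (pos_top hn).
Proof.
move=> SH; have [_ [_ [_ [_ [_ [_ [_ [_ [sh2 _]]]]]]]]] := SH.
have imp_gt0 := chain_imp_gt0 sh2.
have meet_gt0 (a b : 'I_n) : 0 < a -> 0 < b -> 0 < chain_meet a b.
  by rewrite chain_meet_gt0 => -> ->.
have join_gt0 (a b : 'I_n) : 0 < a -> 0 < b -> 0 < chain_join a b.
  by rewrite chain_join_gt0 => ->.
split=> [a b|].
  by rewrite !neq_a0 => a_gt0 b_gt0; split; [exact: meet_gt0|exact: join_gt0|exact: imp_gt0].
apply: semiHeyting_embedding SH;
  [exact: val_inj | exact: val_restr.. | by [] | exact: chain_join_a1].
Qed.
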